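(* Let $D$ be a double extended meta-interpreter, $P$ a definite program, $Q_0$ an atomic query of the language of $P$, and $u_1,\dots,u_n$ terms. Then for every call $\mathit{solve}(Q,t_1,\dots,t_n)\in\mathrm{Call}(D\cup\mathit{ce}^D(P),\mathit{solve}(Q_0,u_1,\dots,u_n))$ there exists a call $\mathit{solve}(G)\in\mathrm{Call}(M_0\cup\mathit{ce}(P),\mathit{solve}(Q_0))$ such that $Q$ is an instance of $G$.
   Context: Logic programs are definite; LD-derivations use the leftmost selection rule. For a program $P$ and a set of queries $S$, $\mathrm{Call}(P,S)$ is the set of atoms $A$ such that a variant of $A$ is a selected atom in some branch of the LD-tree of $P\cup\{Q\}$ for some $Q\in S$; $\mathrm{Call}(P,Q)=\mathrm{Call}(P,\{Q\})$. A double extended meta-interpreter is a definite program consisting of three clauses of the form $\mathit{solve}(\mathit{true},t_{11},\dots,t_{1n})\leftarrow C_{11},\dots,C_{1m_1}.$ $\mathit{solve}((A,B),t_{21},\dots,t_{2n})\leftarrow D_{11},\dots,D_{1k_1},\mathit{solve}(A,t_{31},\dots,t_{3n}),D_{21},\dots,D_{2k_2},\mathit{solve}(B,t_{41},\dots,t_{4n}),C_{21},\dots,C_{2m_2}.$ $\mathit{solve}(A,t_{51},\dots,t_{5n})\leftarrow D_{31},\dots,D_{3k_3},\mathit{clause}(A,B,s_1,\dots,s_k),D_{41},\dots,D_{4k_4},\mathit{solve}(B,t_{61},\dots,t_{6n}),C_{31},\dots,C_{3m_3}.$ where $A,B$ are variables (the meta-variables), the $t_{ij},s_j$ are terms, together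 with clauses defining the other predicates occurring in the atoms $C_{kl},D_{pq}$, none of which contain $\mathit{solve}$ or $\mathit{clause}$. A clause body $B_1,\dots,B_m$ is encoded as the term $(B_1,(B_2,\dots,B_m))$ using the binary functor $,/2$ and an empty body as $\mathit{true}$; $\mathit{ce}(P)$ is the set of facts $\mathit{clause}(H,B)$, one per clause $H\leftarrow B$ of $P$; $\mathit{ce}^D(P)$ is a set of facts $\mathit{clause}(H,B,s_1,\dots,s_k)$ such that for every clause $H\leftarrow B$ of $P$ there is a unique fact of the form $\mathit{clause}(H,B,\dots)$ in it and every fact in it comes from a clause of $P$. The symbols $,/2$, $\mathit{clause}$, $\mathit{solve}$ do not occur in the language of $P$. The ``vanilla'' meta-interpreter $M_0$ is: $\mathit{solve}(\mathit{true}).$ $\mathit{solve}((A,B))\leftarrow\mathit{solve}(A),\mathit{solve}(B).$ $\mathit{solve}(H)\leftarrow\mathit{clause}(H,B),\mathit{solve}(B).$ *)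

From Stdlib Require Import List Relations.
Import ListNotations.

(** Symbols (function and predicate symbols share one name space, as in
    Prolog; arity is given by the length of the argument list). *)
Inductive sym : Type := Comma | TrueS | Solve | ClauseS | Sym (i : nat).

Inductive term : Type :=
| Var (x : nat)
| Fn (f : sym) (args : list term).

Definition is_atom (t : term) : Prop := exists f args, t = Fn f args.

Fixpoint subst (s : nat -> term) (t : term) : term :=
  match t with
  | Var x => s x
  | Fn f args => Fn f (map (subst s) args)
  end.

Fixpoint vars (t : term) : list nat :=
  match t with
  | Var x => [x]
  | Fn _ args => flat_map vars args
  end.

Fixpoint syms (t : term) : list sym :=
  match t with
  | Var _ => []
  | Fn f args => f :: flat_map syms args
  end.

(** A definite clause [H <- B1,...,Bm] : head and list of body atoms. *)
Definition clause : Type := (term * list term)%type.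
Definition program : Type := list clause.

Definition definite_clause (c : clause) : Prop :=
  is_atom (fst c) /\ Forall is_atom (snd c).
Definition definite_program (P : program) : Prop := Forall definite_clause P.

Definition clause_terms (c : clause) : list term := fst c :: snd c.

Definition renaming (r : nat -> nat) : Prop :=
  exists r', forall x, r (r' x) = x /\ r' (r x) = x.
Definition ren (r : nat -> nat) : nat -> term := fun x => Var (r x).
Definition rename_clause (r : nat -> nat) (c : clause) : clause :=
  (subst (ren r) (fst c), map (subst (ren r)) (snd c)).

Definition variant (a b : term) : Prop :=
  exists r, renaming r /\ subst (ren r) b = a.

Definition instance (a g : term) : Prop := exists s, subst s g = a.

Definition unifier (th : nat -> term) (a b : term) : Prop :=
  subst th a = subst th b.
Definition mgu (th : nat -> term) (a b : term) : Prop :=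
  unifier th a b /\
  forall s, unifier s a b -> exists d, forall x, s x = subst d (th x).

Definition ld_step (P : program) (Q Q' : list term) : Prop :=
  exists (A : term) (rest : list term) (c : clause) (r : nat -> nat)
         (th : nat -> term),
    Q = A :: rest /\ In c P /\ renaming r /\
    (forall x, In x (flat_map vars (clause_terms (rename_clause r c))) ->
               ~ In x (flat_map vars Q)) /\
    mgu th A (fst (rename_clause r c)) /\
    Q' = map (subst th) (snd (rename_clause r c) ++ rest).

Definition ld_node (P : program) (Q Q' : list term) : Prop :=
  clos_refl_trans _ (ld_step P) Q Q'.

Definition Call (P : program) (Q : list term) (A : term) : Prop :=
  exists B rest, ld_node P Q (B :: rest) /\ variant B A.

Fixpoint enc_body (bs : list term) : term :=
  match bs with
  | [] => Fn TrueS []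
  | [b] => b
  | b :: bs' => Fn Comma [b; enc_body bs']
  end.

Definition ce (P : program) : program :=
  map (fun c => (Fn ClauseS [fst c; enc_body (snd c)], [])) P.

Definition ceD_fact (c : clause) (ss : list term) : clause :=
  (Fn ClauseS (fst c :: enc_body (snd c) :: ss), []).

Definition is_ceD (P : program) (k : nat) (F : program) : Prop :=
  (forall c, In c P ->
     exists ss, length ss = k /\ In (ceD_fact c ss) F /\
       (forall ss', In (ceD_fact c ss') F -> ss' = ss)) /\
  (forall f, In f F -> exists c ss, In c P /\ length ss = k /\ f = ceD_fact c ss).

(** The vanilla meta-interpreter M0 (meta-variables A = Var 0, B = Var 1). *)
Definition M0 : program :=
  [ (Fn Solve [Fn TrueS []], []);
    (Fn Solve [Fn Comma [Var 0; Var 1]], [Fn Solve [Var 0]; Fn Solve [Var 1]]);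
    (Fn Solve [Var 0], [Fn ClauseS [Var 0; Var 1]; Fn Solve [Var 1]]) ].

Record dmi : Type := {
  dn : nat; dk : nat;
  va : nat; vb : nat;                   (* the meta-variables A, B *)
  t1 : list term; t2 : list term; t3 : list term;
  t4 : list term; t5 : list term; t6 : list term;
  sk : list term;
  C1 : list term; C2 : list term; C3 : list term;
  D1 : list term; D2 : list term; D3 : list term; D4 : list term;
  aux : program                         (* clauses defining the other predicates *)
}.

Definition no_solve_clause (t : term) : Prop :=
  ~ In Solve (syms t) /\ ~ In ClauseS (syms t).

Definition wf_dmi (D : dmi) : Prop :=
  va D <> vb D /\
  length (t1 D) = dn D /\ length (t2 D) = dn D /\ length (t3 D) = dn D /\
  length (t4 D) = dn D /\ length (t5 D) = dn D /\ length (t6 D) = dn D /\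
  length (sk D) = dk D /\
  Forall (fun t => is_atom t /\ no_solve_clause t)
    (C1 D ++ C2 D ++ C3 D ++ D1 D ++ D2 D ++ D3 D ++ D4 D) /\
  definite_program (aux D) /\
  Forall (fun c => Forall no_solve_clause (clause_terms c)) (aux D).

Definition dmi_prog (D : dmi) : program :=
  [ (Fn Solve (Fn TrueS [] :: t1 D), C1 D);
    (Fn Solve (Fn Comma [Var (va D); Var (vb D)] :: t2 D),
       D1 D ++ [Fn Solve (Var (va D) :: t3 D)] ++ D2 D ++
       [Fn Solve (Var (vb D) :: t4 D)] ++ C2 D);
    (Fn Solve (Var (va D) :: t5 D),
       D3 D ++ [Fn ClauseS (Var (va D) :: Var (vb D) :: sk D)] ++ D4 D ++
       [Fn Solve (Var (vb D) :: t6 D)] ++ C3 D) ]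
  ++ aux D.

Definition in_lang_P (t : term) : Prop :=
  ~ In Comma (syms t) /\ ~ In Solve (syms t) /\ ~ In ClauseS (syms t).
Definition program_in_lang (P : program) : Prop :=
  Forall (fun c => Forall in_lang_P (clause_terms c)) P.

From Stdlib Require Import List Arith Lia Relations.
Import ListNotations.

(* Erase the extra arguments of solve and clause and delete the atoms of all
   other predicates.  Under this projection every clause instance of
   D u ce^D(P) either vanishes or becomes an instance of a clause of
   M0 u ce(P).  By the lifting lemma, each LD-step in the tree of D u ce^D(P)
   is then matched by zero or one LD-step in the tree of M0 u ce(P), keeping the
   invariant that the projection of the current query is an instance of the
   current vanilla query; a selected solve(Q, ...) thus projects to an instance
   of a selected solve(G).  Lifting needs most general unifiers, which exist by
   the unification algorithm: eliminating a variable lowers the number of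
   variables, the other rules lower the size of the equations. *)

(** * Substitution *)

Definition term_nested_ind (P : term -> Prop) (HV : forall x, P (Var x))
  (HF : forall f args, Forall P args -> P (Fn f args)) : forall t, P t :=
  fix F t := match t with
  | Var x => HV x
  | Fn f args => HF f args ((fix G (l : list term) : Forall P l :=
      match l with
      | [] => Forall_nil P
      | a :: l' => Forall_cons a (F a) (G l')
      end) args)
  end.

Lemma subst_ext_in s1 s2 t :
  (forall x, In x (vars t) -> s1 x = s2 x) -> subst s1 t = subst s2 t.
Proof.
  revert s1 s2; induction t as [x|f args IH] using term_nested_ind; intros s1 s2 H; simpl.
  - apply H; simpl; auto.
  - f_equal. apply map_ext_in. intros a Ha. rewrite Forall_forall in IH.
    apply IH; auto. intros y Hy. apply H. simpl. apply in_flat_map. eauto.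
Qed.

Lemma subst_subst s1 s2 t :
  subst s2 (subst s1 t) = subst (fun x => subst s2 (s1 x)) t.
Proof.
  induction t as [x|f args IH] using term_nested_ind; simpl; auto.
  f_equal. rewrite map_map. apply map_ext_in. intros a Ha. rewrite Forall_forall in IH. auto.
Qed.

Lemma map_subst_subst s1 s2 l :
  map (subst s2) (map (subst s1) l) = map (subst (fun x => subst s2 (s1 x))) l.
Proof. rewrite map_map. apply map_ext. intros t. apply subst_subst. Qed.

Lemma subst_Var t : subst Var t = t.
Proof.
  induction t as [x|f args IH] using term_nested_ind; simpl; auto.
  f_equal. rewrite <- map_id. apply map_ext_in. intros a Ha. rewrite Forall_forall in IH. auto.
Qed.

Lemma in_vars_subst s t y :
  In y (vars (subst s t)) -> exists x, In x (vars t) /\ In y (vars (s x)).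
Proof.
  induction t as [x|f args IH] using term_nested_ind; simpl; intros H.
  - exists x. auto.
  - apply in_flat_map in H as [u [Hu Hy]]. apply in_map_iff in Hu as [a [<- Ha]].
    rewrite Forall_forall in IH. destruct (IH a Ha Hy) as [x [Hx Hyx]].
    exists x. split; auto. apply in_flat_map. eauto.
Qed.

Lemma is_atom_Fn f args : is_atom (Fn f args).
Proof. exists f, args. reflexivity. Qed.

Lemma is_atom_subst s t : is_atom t -> is_atom (subst s t).
Proof. intros [f [args ->]]. apply is_atom_Fn. Qed.

Fixpoint tsize (t : term) : nat :=
  match t with Var _ => 1 | Fn _ args => S (list_sum (map tsize args)) end.

Lemma tsize_le_sum a l : In a l -> tsize a <= list_sum (map tsize l).
Proof. induction l as [|b l IH]; simpl; [tauto|]. intros [->|H]; [|apply IH in H]; lia. Qed.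

Lemma tsize_subst_var s t x : In x (vars t) -> tsize (s x) <= tsize (subst s t).
Proof.
  induction t as [y|f args IH] using term_nested_ind; simpl; intros H.
  - destruct H as [->|[]]. lia.
  - apply in_flat_map in H as [a [Ha Hx]]. rewrite Forall_forall in IH.
    pose proof (IH a Ha Hx). pose proof (tsize_le_sum _ _ (in_map (subst s) _ _ Ha)). lia.
Qed.

Lemma subst_occurs_neq s x t : In x (vars t) -> t <> Var x -> s x <> subst s t.
Proof.
  intros H Hne Heq. destruct t as [y|f args]; simpl in H.
  - destruct H as [->|[]]. auto.
  - apply in_flat_map in H as [a [Ha Hx]].
    pose proof (tsize_subst_var s a x Hx).
    pose proof (tsize_le_sum _ _ (in_map (subst s) _ _ Ha)).
    apply (f_equal tsize) in Heq. simpl in Heq. lia.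
Qed.

(** * Most general unifiers *)

Definition unifies (s : nat -> term) (E : list (term * term)) : Prop :=
  Forall (fun e => subst s (fst e) = subst s (snd e)) E.

Definition has_mgu (E : list (term * term)) : Prop :=
  exists th, unifies th E /\
    forall s, unifies s E -> exists d, forall x, s x = subst d (th x).

Definition eqs_vars (E : list (term * term)) : list nat :=
  flat_map (fun e => vars (fst e) ++ vars (snd e)) E.
Definition eqs_nvars (E : list (term * term)) : nat :=
  length (nodup Nat.eq_dec (eqs_vars E)).
Definition eqs_size (E : list (term * term)) : nat :=
  list_sum (map (fun e => tsize (fst e) + tsize (snd e)) E).

Lemma has_mgu_equiv E E' :
  (forall s, unifies s E <-> unifies s E') -> has_mgu E' -> has_mgu E.
Proof.
  intros Heq [th [Hth Hgen]]. exists th. split.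
  - apply Heq, Hth.
  - intros s Hs. apply Hgen, Heq, Hs.
Qed.

Lemma unifies_combine s l1 l2 : length l1 = length l2 ->
  unifies s (combine l1 l2) <-> map (subst s) l1 = map (subst s) l2.
Proof.
  revert l2; induction l1 as [|a l1 IH]; intros [|b l2] Hl; simpl in *; try discriminate.
  - split; constructor.
  - injection Hl as Hl. unfold unifies in *. rewrite Forall_cons_iff, IH by exact Hl.
    simpl. split; [intros [-> ->]; reflexivity | intros H; injection H; auto].
Qed.

Lemma unifies_decompose s f args brgs E :
  length args = length brgs ->
  unifies s ((Fn f args, Fn f brgs) :: E) <-> unifies s (combine args brgs ++ E).
Proof.
  intros Hl. unfold unifies. rewrite Forall_cons_iff, Forall_app.
  fold (unifies s (combine args brgs)). rewrite unifies_combine by exact Hl.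
  simpl. split; [intros [H HE]; injection H; auto | intros [-> HE]; auto].
Qed.

Lemma eqs_size_combine l1 l2 : length l1 = length l2 ->
  eqs_size (combine l1 l2) = list_sum (map tsize l1) + list_sum (map tsize l2).
Proof.
  revert l2; induction l1 as [|a l1 IH]; intros [|b l2] Hl; simpl in *; try discriminate; auto.
  injection Hl as Hl. unfold eqs_size in *. simpl. rewrite IH; auto. lia.
Qed.

Lemma eqs_nvars_incl E1 E2 :
  incl (eqs_vars E1) (eqs_vars E2) -> eqs_nvars E1 <= eqs_nvars E2.
Proof.
  intros H. apply NoDup_incl_length; [apply NoDup_nodup|].
  intros y Hy. apply nodup_In in Hy. apply nodup_In. auto.
Qed.

Lemma eqs_nvars_incl_lt E1 E2 x :
  incl (eqs_vars E1) (eqs_vars E2) -> In x (eqs_vars E2) -> ~ In x (eqs_vars E1) ->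
  eqs_nvars E1 < eqs_nvars E2.
Proof.
  intros H Hx Hn. unfold eqs_nvars.
  apply Nat.le_lt_trans with (length (remove Nat.eq_dec x (nodup Nat.eq_dec (eqs_vars E2)))).
  - apply NoDup_incl_length; [apply NoDup_nodup|].
    intros y Hy. apply nodup_In in Hy. apply in_in_remove.
    + intros ->. auto.
    + apply nodup_In. auto.
  - apply remove_length_lt. apply nodup_In. auto.
Qed.

Definition bind (x : nat) (t : term) : nat -> term :=
  fun y => if Nat.eq_dec y x then t else Var y.

Definition elim_eqs (x : nat) (t : term) (E : list (term * term)) : list (term * term) :=
  map (fun e => (subst (bind x t) (fst e), subst (bind x t) (snd e))) E.

Lemma subst_bind_unifier s x t u :
  s x = subst s t -> subst s (subst (bind x t) u) = subst s u.
Proof.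
  intros Hs. rewrite subst_subst. apply subst_ext_in. intros y _. unfold bind.
  destruct (Nat.eq_dec y x) as [->|]; auto.
Qed.

Lemma subst_bind_notin x t u : ~ In x (vars u) -> subst (bind x t) u = u.
Proof.
  intros Hx. rewrite <- (subst_Var u) at 2. apply subst_ext_in. intros y Hy. unfold bind.
  destruct (Nat.eq_dec y x) as [->|]; tauto.
Qed.

Lemma in_vars_subst_bind x t u y : ~ In x (vars t) ->
  In y (vars (subst (bind x t) u)) -> y <> x /\ (In y (vars t) \/ In y (vars u)).
Proof.
  intros Hx Hy. apply in_vars_subst in Hy as [z [Hz Hyz]]. unfold bind in Hyz.
  destruct (Nat.eq_dec z x) as [->|Hzx].
  - split; [intros ->|]; auto.
  - simpl in Hyz. destruct Hyz as [->|[]]. auto.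
Qed.

Lemma unifies_elim s x t E :
  unifies s ((Var x, t) :: E) <-> s x = subst s t /\ unifies s (elim_eqs x t E).
Proof.
  unfold unifies, elim_eqs. rewrite Forall_cons_iff, Forall_map. simpl.
  split; intros [Hx HE]; split; auto; revert HE; apply Forall_impl; intros e;
    simpl; rewrite !subst_bind_unifier by exact Hx; auto.
Qed.

Lemma has_mgu_elim x t E :
  ~ In x (vars t) -> has_mgu (elim_eqs x t E) -> has_mgu ((Var x, t) :: E).
Proof.
  intros Hx [th [Hth Hgen]].
  exists (fun y => subst th (bind x t y)). split.
  - constructor; simpl.
    + rewrite <- subst_subst, subst_bind_notin by exact Hx.
      unfold bind. destruct (Nat.eq_dec x x); [reflexivity | congruence].
    + unfold unifies, elim_eqs in Hth. rewrite Forall_map in Hth.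
      revert Hth. apply Forall_impl. intros e. simpl. rewrite <- !subst_subst. auto.
  - intros s Hs. apply unifies_elim in Hs as [Hsx HsE].
    destruct (Hgen s HsE) as [d Hd]. exists d. intros y.
    rewrite subst_subst, <- (subst_ext_in s) by (intros; auto).
    unfold bind. destruct (Nat.eq_dec y x) as [->|]; auto.
Qed.

Lemma eqs_nvars_elim x t E : ~ In x (vars t) ->
  eqs_nvars (elim_eqs x t E) < eqs_nvars ((Var x, t) :: E).
Proof.
  intros Hx. apply eqs_nvars_incl_lt with x.
  - intros y Hy. apply in_flat_map in Hy as [e [He Hy]].
    apply in_map_iff in He as [e0 [<- He0]]. simpl in Hy. simpl. right.
    rewrite in_app_iff. apply in_app_iff in Hy as [Hy|Hy];
      apply in_vars_subst_bind in Hy as [_ [Hy|Hy]]; auto;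
      right; apply in_flat_map; exists e0; rewrite in_app_iff; auto.
  - simpl. auto.
  - intros Hy. apply in_flat_map in Hy as [e [He Hy]].
    apply in_map_iff in He as [e0 [<- _]]. simpl in Hy.
    apply in_app_iff in Hy as [Hy|Hy]; apply in_vars_subst_bind in Hy; tauto.
Qed.

Lemma eqs_nvars_swap a b E : eqs_nvars ((b, a) :: E) = eqs_nvars ((a, b) :: E).
Proof.
  apply Nat.le_antisymm; apply eqs_nvars_incl; intros y;
    unfold eqs_vars; simpl; rewrite !in_app_iff; tauto.
Qed.

Lemma has_mgu_var_head x t E :
  (forall E', eqs_nvars E' < eqs_nvars ((Var x, t) :: E) -> (exists s, unifies s E') -> has_mgu E') ->
  (exists s, unifies s ((Var x, t) :: E)) -> t <> Var x -> has_mgu ((Var x, t) :: E).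
Proof.
  intros IH [s Hs] Hne.
  assert (Hx : ~ In x (vars t)).
  { intros Hin. apply unifies_elim in Hs as [Hsx _]. exact (subst_occurs_neq s x t Hin Hne Hsx). }
  apply has_mgu_elim; auto. apply IH; [apply eqs_nvars_elim; auto|].
  exists s. apply unifies_elim in Hs. tauto.
Qed.

Lemma eqs_decompose_smaller f g args brgs E : length args = length brgs ->
  eqs_nvars (combine args brgs ++ E) <= eqs_nvars ((Fn f args, Fn g brgs) :: E) /\
  eqs_size (combine args brgs ++ E) < eqs_size ((Fn f args, Fn g brgs) :: E).
Proof.
  intros Hl. split.
  - apply eqs_nvars_incl. intros z Hz.
    unfold eqs_vars in Hz |- *. rewrite flat_map_app, in_app_iff in Hz. simpl.
    rewrite !in_app_iff. destruct Hz as [Hz|Hz]; [|auto].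
    apply in_flat_map in Hz as [[u v] [Huv Hz]]. simpl in Hz.
    left. apply in_app_iff in Hz as [Hz|Hz]; [left|right]; apply in_flat_map; eauto.
    + exists u. split; auto. eapply in_combine_l; eauto.
    + exists v. split; auto. eapply in_combine_r; eauto.
  - unfold eqs_size at 1. rewrite map_app, list_sum_app.
    fold (eqs_size (combine args brgs)) (eqs_size E).
    rewrite eqs_size_combine by exact Hl. unfold eqs_size. simpl. lia.
Qed.

Lemma eqs_lex_ind (P : list (term * term) -> Prop) :
  (forall E, (forall E', eqs_nvars E' < eqs_nvars E \/
                         eqs_nvars E' <= eqs_nvars E /\ eqs_size E' < eqs_size E -> P E') ->
             P E) ->
  forall E, P E.
Proof.
  intros Hstep.
  enough (H : forall n m E, eqs_nvars E <= n -> eqs_size E <= m -> P E) by eauto.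
  induction n as [n IHn] using lt_wf_ind; induction m as [m IHm] using lt_wf_ind.
  intros E Hn Hm. apply Hstep. intros E' [H1|[H1 H2]].
  - apply (IHn (eqs_nvars E')) with (eqs_size E'); lia.
  - apply (IHm (eqs_size E')); lia.
Qed.

Lemma has_mgu_of_unifiable E : (exists s, unifies s E) -> has_mgu E.
Proof.
  induction E as [E IH] using eqs_lex_ind. intros Hs.
  destruct E as [|[a b] E].
  { exists Var. split; [constructor|]. intros s _. exists s. reflexivity. }
  assert (Hswap : forall s, unifies s ((a, b) :: E) <-> unifies s ((b, a) :: E))
    by (intros s; unfold unifies; rewrite !Forall_cons_iff; intuition).
  destruct a as [x|f args]; [destruct b as [y|g brgs]|].
  - destruct (Nat.eq_dec x y) as [<-|Hxy]; [|apply has_mgu_var_head; auto; congruence].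
    apply has_mgu_equiv with E.
    { intros s. unfold unifies. rewrite Forall_cons_iff. tauto. }
    destruct Hs as [s Hs]. apply IH; [|exists s; exact (Forall_inv_tail Hs)].
    right. split.
    + apply eqs_nvars_incl. intros y Hy. simpl. auto.
    + unfold eqs_size. simpl. lia.
  - apply has_mgu_var_head; auto. discriminate.
  - destruct b as [y|g brgs].
    + apply (has_mgu_equiv _ _ Hswap), has_mgu_var_head; [| |discriminate].
      * rewrite eqs_nvars_swap. auto.
      * destruct Hs as [s Hs]. exists s. apply Hswap, Hs.
    + destruct Hs as [s0 Hs0]. pose proof (Forall_inv Hs0) as Hh. simpl in Hh.
      injection Hh as <- Hargs.
      assert (Hl : length args = length brgs)
        by (rewrite <- (length_map (subst s0) args), Hargs; apply length_map).
      apply has_mgu_equiv with (combine args brgs ++ E);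
        [intros s; apply unifies_decompose, Hl|].
      apply IH; [|exists s0; apply (unifies_decompose s0 f args brgs E Hl), Hs0].
      right. apply eqs_decompose_smaller, Hl.
Qed.

Lemma mgu_of_unifier s a b : unifier s a b -> exists th, mgu th a b.
Proof.
  intros Hs. destruct (has_mgu_of_unifiable [(a, b)]) as [th [Hth Hgen]].
  - exists s. repeat constructor. exact Hs.
  - exists th. split.
    + exact (Forall_inv Hth).
    + intros s' Hs'. apply Hgen. repeat constructor. exact Hs'.
Qed.

(** * Standardization apart and lifting *)

Definition swap_block (N x : nat) : nat :=
  if x <? N then x + N else if x <? N + N then x - N else x.

Lemma swap_block_involutive N x : swap_block N (swap_block N x) = x.
Proof.
  unfold swap_block.
  destruct (Nat.ltb_spec x N); [|destruct (Nat.ltb_spec x (N + N))];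
    repeat match goal with |- context [?a <? ?b] => destruct (Nat.ltb_spec a b) end; lia.
Qed.

Lemma swap_block_lt N x : x < N -> swap_block N x = x + N.
Proof. intros Hx. unfold swap_block. destruct (Nat.ltb_spec x N); lia. Qed.

Lemma renaming_swap_block N : renaming (swap_block N).
Proof. exists (swap_block N). intros x. rewrite !swap_block_involutive. auto. Qed.

Lemma clause_terms_rename r c :
  clause_terms (rename_clause r c) = map (subst (ren r)) (clause_terms c).
Proof. reflexivity. Qed.

Lemma standardize_apart (l : list nat) (c : clause) :
  exists r, renaming r /\
    (forall x, In x (flat_map vars (clause_terms (rename_clause r c))) -> ~ In x l) /\
    forall f tau : nat -> term, exists s,
      (forall x, In x l -> s x = f x) /\
      (forall t, In t (clause_terms c) -> subst s (subst (ren r) t) = subst tau t).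
Proof.
  set (N := S (list_max (l ++ flat_map vars (clause_terms c)))).
  assert (HN : forall x, In x (l ++ flat_map vars (clause_terms c)) -> x < N).
  { intros x Hx. unfold N. apply Nat.lt_succ_r.
    pose proof (proj1 (list_max_le (l ++ flat_map vars (clause_terms c)) _) (le_n _)) as H.
    rewrite Forall_forall in H. auto. }
  assert (Hc : forall t x, In t (clause_terms c) -> In x (vars t) -> x < N)
    by (intros t x Ht Hx; apply HN, in_app_iff; right; apply in_flat_map; eauto).
  exists (swap_block N). split; [apply renaming_swap_block|]. split.
  - intros y Hy Hl. rewrite clause_terms_rename in Hy.
    apply in_flat_map in Hy as [u [Hu Hy]]. apply in_map_iff in Hu as [t [<- Ht]].
    apply in_vars_subst in Hy as [x [Hx [<-|[]]]].
    rewrite swap_block_lt in Hl by eauto.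
    assert (x + N < N) by (apply HN, in_app_iff; auto). lia.
  - intros f tau. exists (fun y => if y <? N then f y else tau (y - N)). split.
    + intros x Hx. assert (x < N) by (apply HN, in_app_iff; auto).
      destruct (Nat.ltb_spec x N); [reflexivity | lia].
    + intros t Ht. rewrite subst_subst. apply subst_ext_in. intros x Hx. simpl.
      assert (x < N) by eauto. rewrite swap_block_lt by assumption.
      destruct (Nat.ltb_spec (x + N) N); [lia|]. f_equal. lia.
Qed.

Lemma ld_step_lifting Pr A rest c f tau :
  In c Pr -> subst f A = subst tau (fst c) ->
  exists Q' d, ld_step Pr (A :: rest) Q' /\
    map (subst d) Q' = map (subst tau) (snd c) ++ map (subst f) rest.
Proof.
  intros Hc Hmatch.
  destruct (standardize_apart (flat_map vars (A :: rest)) c) as (r & Hr & Hfresh & Hsplit).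
  destruct (Hsplit f tau) as (s & Hsf & Hst).
  assert (Hquery : forall t, In t (A :: rest) -> subst s t = subst f t)
    by (intros t Ht; apply subst_ext_in; intros x Hx; apply Hsf, in_flat_map; eauto).
  assert (Hhead : unifier s A (fst (rename_clause r c))).
  { unfold unifier. simpl. rewrite Hquery, Hmatch, Hst by (simpl; auto). reflexivity. }
  destruct (mgu_of_unifier _ _ _ Hhead) as [th Hth].
  destruct (proj2 Hth s Hhead) as [d Hd].
  exists (map (subst th) (snd (rename_clause r c) ++ rest)), d. split.
  - exists A, rest, c, r, th. auto 6.
  - rewrite map_subst_subst, (map_ext _ (subst s)), map_app
      by (intros t; apply subst_ext_in; intros; auto).
    f_equal.
    + simpl. rewrite map_map. apply map_ext_in. intros t Ht. apply Hst. simpl. auto.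
    + apply map_ext_in. intros t Ht. apply Hquery. simpl. auto.
Qed.

Lemma ld_step_instance Pr Q Q' : ld_step Pr Q Q' ->
  exists A rest c th s, Q = A :: rest /\ In c Pr /\
    subst th A = subst s (fst c) /\ Q' = map (subst s) (snd c) ++ map (subst th) rest.
Proof.
  intros (A & rest & c & r & th & -> & Hc & _ & _ & [Hu _] & ->).
  exists A, rest, c, th, (fun x => th (r x)). split; [reflexivity|]. split; [exact Hc|].
  unfold unifier in Hu. simpl in Hu. rewrite subst_subst in Hu. split; [exact Hu|].
  rewrite map_app. simpl. rewrite map_subst_subst. reflexivity.
Qed.

Lemma ld_node_atoms Pr Q Q' :
  definite_program Pr -> ld_node Pr Q Q' -> Forall is_atom Q -> Forall is_atom Q'.
Proof.
  intros HPr H. induction H as [Q Q' Hstep| |]; auto.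
  apply ld_step_instance in Hstep as (A & rest & c & th & s & -> & Hc & _ & ->).
  intros HQ. unfold definite_program in HPr. rewrite Forall_forall in HPr.
  apply Forall_app. split; apply Forall_map.
  - exact (Forall_impl _ (is_atom_subst s) (proj2 (HPr c Hc))).
  - exact (Forall_impl _ (is_atom_subst th) (Forall_inv_tail HQ)).
Qed.

(** * Projection onto the vanilla meta-interpreter *)

Definition vanilla_atom (t : term) : list term :=
  match t with
  | Fn Solve (q :: _) => [Fn Solve [q]]
  | Fn ClauseS (h :: b :: _) => [Fn ClauseS [h; b]]
  | _ => []
  end.

Definition vanilla_query (Q : list term) : list term := flat_map vanilla_atom Q.

Definition vanilla_generalizes (V Q : list term) : Prop :=
  exists sg, map (subst sg) V = vanilla_query Q.

Lemma vanilla_atom_subst s t :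
  is_atom t -> vanilla_atom (subst s t) = map (subst s) (vanilla_atom t).
Proof. intros [f [args ->]]. destruct f; destruct args as [|q [|b l]]; reflexivity. Qed.

Lemma vanilla_query_subst s Q :
  Forall is_atom Q -> vanilla_query (map (subst s) Q) = map (subst s) (vanilla_query Q).
Proof.
  induction 1 as [|t Q Ht _ IH]; [reflexivity|].
  unfold vanilla_query in *. simpl. rewrite map_app, IH, vanilla_atom_subst by exact Ht.
  reflexivity.
Qed.

Definition side_atom (t : term) : Prop := is_atom t /\ no_solve_clause t.

Lemma vanilla_atom_side s t : side_atom t -> vanilla_atom (subst s t) = [].
Proof.
  intros [[f [args ->]] [Hs Hc]]. simpl in Hs, Hc.
  destruct f; try (exfalso; auto; fail); reflexivity.
Qed.

Lemma vanilla_query_side s l : Forall side_atom l -> vanilla_query (map (subst s) l) = [].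
Proof.
  induction 1 as [|t l Ht _ IH]; [reflexivity|].
  unfold vanilla_query in *. simpl. rewrite IH, vanilla_atom_side; auto.
Qed.

Definition vanilla_simulates (Pv : program) (c : clause) : Prop :=
  forall s,
    (vanilla_atom (subst s (fst c)) = [] /\ vanilla_query (map (subst s) (snd c)) = []) \/
    exists cv tau, In cv Pv /\
      vanilla_atom (subst s (fst c)) = [subst tau (fst cv)] /\
      vanilla_query (map (subst s) (snd c)) = map (subst tau) (snd cv).

Lemma vanilla_generalizes_step Pr Pv Q Q' V :
  (forall c, In c Pr -> vanilla_simulates Pv c) ->
  ld_step Pr Q Q' -> Forall is_atom Q -> vanilla_generalizes V Q ->
  exists V', ld_node Pv V V' /\ vanilla_generalizes V' Q'.
Proof.
  intros Hsim Hstep HQ [sg Hsg].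
  apply ld_step_instance in Hstep as (A & rest & c & th & s & -> & Hc & Hhead & ->).
  apply Forall_cons_iff in HQ as [HA Hrest].
  assert (Htarget : vanilla_query (map (subst s) (snd c) ++ map (subst th) rest) =
                    vanilla_query (map (subst s) (snd c)) ++ map (subst th) (vanilla_query rest))
    by (rewrite <- (vanilla_query_subst th rest Hrest); apply flat_map_app).
  unfold vanilla_query in Hsg. simpl in Hsg. fold (vanilla_query rest) in Hsg.
  destruct (Hsim c Hc s) as [[Hnone Hbody] | (cv & tau & Hcv & Hone & Hbody)];
    rewrite <- Hhead, vanilla_atom_subst in * by exact HA.
  - exists V. split; [apply rt_refl|]. exists (fun x => subst th (sg x)).
    apply map_eq_nil in Hnone. rewrite Hnone in Hsg. simpl in Hsg.
    rewrite Htarget, Hbody, <- map_subst_subst, Hsg. reflexivity.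
  - apply map_eq_cons in Hone as (a & nil' & Ha & Hatau & Hnil).
    apply map_eq_nil in Hnil. subst nil'. rewrite Ha in Hsg. simpl in Hsg.
    destruct V as [|v V]; [discriminate|]. simpl in Hsg. injection Hsg as Hv HV.
    destruct (ld_step_lifting Pv v V cv (fun x => subst th (sg x)) tau Hcv)
      as (V' & d & HV' & Hd).
    { rewrite <- subst_subst, Hv. exact Hatau. }
    exists V'. split; [apply rt_step, HV'|]. exists d.
    rewrite Hd, Htarget, Hbody, <- map_subst_subst, HV. reflexivity.
Qed.

Lemma ld_node_vanilla_generalizes Pr Pv Q0 V0 Q :
  definite_program Pr -> (forall c, In c Pr -> vanilla_simulates Pv c) ->
  Forall is_atom Q0 -> vanilla_generalizes V0 Q0 -> ld_node Pr Q0 Q ->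
  exists V, ld_node Pv V0 V /\ vanilla_generalizes V Q.
Proof.
  intros HPr Hsim HQ0 HV0 Hnode. apply clos_rt_rtn1 in Hnode.
  induction Hnode as [|Q Q' Hstep Hnode IH].
  - exists V0. split; [apply rt_refl | exact HV0].
  - destruct IH as (V & HV & HVQ).
    assert (HQ : Forall is_atom Q)
      by exact (ld_node_atoms Pr Q0 Q HPr (clos_rtn1_rt _ _ _ _ Hnode) HQ0).
    destruct (vanilla_generalizes_step Pr Pv Q Q' V Hsim Hstep HQ HVQ) as (V' & HV' & HVQ').
    exists V'. split; [exact (rt_trans _ _ _ _ _ HV HV') | exact HVQ'].
Qed.

(** * Double extended meta-interpreters *)

Lemma definite_program_vanilla P : definite_program (M0 ++ ce P).
Proof.
  apply Forall_app. split.
  - repeat constructor; apply is_atom_Fn.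
  - apply Forall_map, Forall_forall. intros c _. repeat constructor. apply is_atom_Fn.
Qed.

Lemma wf_dmi_side D : wf_dmi D ->
  forall l, In l [C1 D; C2 D; C3 D; D1 D; D2 D; D3 D; D4 D] -> Forall side_atom l.
Proof.
  intros (_ & _ & _ & _ & _ & _ & _ & _ & Hside & _) l Hl.
  rewrite Forall_forall in Hside |- *. intros t Ht. apply Hside.
  simpl in Hl. rewrite !in_app_iff.
  repeat destruct Hl as [<-|Hl]; tauto.
Qed.

Lemma definite_program_dmi D P k F :
  wf_dmi D -> is_ceD P k F -> definite_program (dmi_prog D ++ F).
Proof.
  intros Hwf [_ HF].
  assert (Hatoms : forall l, In l [C1 D; C2 D; C3 D; D1 D; D2 D; D3 D; D4 D] ->
                             Forall is_atom l)
    by (intros l Hl; eapply Forall_impl, wf_dmi_side; [intros t [Ht _]; exact Ht | eauto..]).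
  destruct Hwf as (_ & _ & _ & _ & _ & _ & _ & _ & _ & Haux & _).
  apply Forall_app. split; [apply Forall_app; split; [|exact Haux]|].
  - repeat constructor; try apply is_atom_Fn;
      repeat (apply Forall_app; split); repeat constructor; try apply is_atom_Fn;
      apply Hatoms; simpl; tauto.
  - apply Forall_forall. intros f Hf. destruct (HF f Hf) as (c & ss & _ & _ & ->).
    repeat constructor. apply is_atom_Fn.
Qed.

Lemma vanilla_simulates_side Pv c :
  side_atom (fst c) -> Forall side_atom (snd c) -> vanilla_simulates Pv c.
Proof.
  intros Hhead Hbody s. left. split.
  - apply vanilla_atom_side, Hhead.
  - apply vanilla_query_side, Hbody.
Qed.

Lemma vanilla_simulates_dmi D P : wf_dmi D ->
  forall c, In c (dmi_prog D) -> vanilla_simulates (M0 ++ ce P) c.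
Proof.
  intros Hwf c Hc.
  assert (Hside : forall s l, In l [C1 D; C2 D; C3 D; D1 D; D2 D; D3 D; D4 D] ->
                              flat_map vanilla_atom (map (subst s) l) = [])
    by (intros s l Hl; apply vanilla_query_side, (wf_dmi_side D Hwf l Hl)).
  apply in_app_iff in Hc as [Hc|Hc].
  - destruct Hc as [<-|[<-|[<-|[]]]]; intros s; right.
    + exists (Fn Solve [Fn TrueS []], []), Var. split; [simpl; auto|].
      split; [reflexivity|]. apply Hside. simpl. tauto.
    + exists (Fn Solve [Fn Comma [Var 0; Var 1]], [Fn Solve [Var 0]; Fn Solve [Var 1]]).
      exists (fun x => match x with 0 => s (va D) | _ => s (vb D) end).
      split; [simpl; auto|]. split; [reflexivity|].
      cbn [snd]. unfold vanilla_query. rewrite !map_app, !flat_map_app.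
      rewrite (Hside s (D1 D)), (Hside s (D2 D)), (Hside s (C2 D)) by (simpl; tauto).
      reflexivity.
    + exists (Fn Solve [Var 0], [Fn ClauseS [Var 0; Var 1]; Fn Solve [Var 1]]).
      exists (fun x => match x with 0 => s (va D) | _ => s (vb D) end).
      split; [simpl; auto|]. split; [reflexivity|].
      cbn [snd]. unfold vanilla_query. rewrite !map_app, !flat_map_app.
      rewrite (Hside s (D3 D)), (Hside s (D4 D)), (Hside s (C3 D)) by (simpl; tauto).
      reflexivity.
  - destruct Hwf as (_ & _ & _ & _ & _ & _ & _ & _ & _ & Haux & Hauxns).
    unfold definite_program in Haux. rewrite Forall_forall in Haux, Hauxns.
    destruct (Haux c Hc) as [Hh Hb]. pose proof (Hauxns c Hc) as Hns.
    apply Forall_cons_iff in Hns as [Hhns Hbns].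
    apply vanilla_simulates_side.
    + split; assumption.
    + rewrite Forall_forall in Hb, Hbns |- *. split; auto.
Qed.

Lemma vanilla_simulates_ceD P c ss : In c P -> vanilla_simulates (M0 ++ ce P) (ceD_fact c ss).
Proof.
  intros Hc s. right. exists (Fn ClauseS [fst c; enc_body (snd c)], []), s. split.
  - apply in_or_app. right. apply (in_map (fun c => (Fn ClauseS [fst c; enc_body (snd c)], []))), Hc.
  - split; reflexivity.
Qed.

Lemma vanilla_simulates_dmi_ceD D P F : wf_dmi D -> is_ceD P (dk D) F ->
  forall c, In c (dmi_prog D ++ F) -> vanilla_simulates (M0 ++ ce P) c.
Proof.
  intros Hwf [_ HF] c Hc. apply in_app_iff in Hc as [Hc|Hc].
  - apply (vanilla_simulates_dmi D); assumption.
  - destruct (HF c Hc) as (c' & ss & Hc' & _ & ->). apply vanilla_simulates_ceD, Hc'.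
Qed.

Lemma instance_trans a b c : instance a b -> instance b c -> instance a c.
Proof.
  intros [s1 <-] [s2 <-]. exists (fun x => subst s1 (s2 x)). symmetry. apply subst_subst.
Qed.

Lemma instance_renamed r t : renaming r -> instance t (subst (ren r) t).
Proof.
  intros [r' Hr]. exists (ren r'). rewrite subst_subst. rewrite <- (subst_Var t) at 2.
  apply subst_ext_in. intros x _. unfold ren. simpl. rewrite (proj2 (Hr x)). reflexivity.
Qed.

Lemma variant_refl t : variant t t.
Proof.
  exists (fun x => x). split; [exists (fun x => x); auto|]. apply subst_Var.
Qed.

Lemma vanilla_generalizes_solve V q ts rest :
  Forall is_atom V -> vanilla_generalizes V (Fn Solve (q :: ts) :: rest) ->
  exists G V', V = Fn Solve [G] :: V' /\ instance q G.
Proof.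
  intros HV [sg Hsg]. destruct V as [|v V]; [discriminate|]. injection Hsg as Hv _.
  destruct (Forall_inv HV) as (f & args & ->). injection Hv as -> Hargs.
  destruct args as [|G [|]]; try discriminate. injection Hargs as HG.
  exists G, V. split; [reflexivity|]. exists sg. exact HG.
Qed.

Theorem mainTheorem6 (D : dmi) (P : program) (ceDP : program)
    (Q0 : term) (us : list term) :
  wf_dmi D ->
  definite_program P -> program_in_lang P ->
  is_ceD P (dk D) ceDP ->
  is_atom Q0 -> in_lang_P Q0 ->
  length us = dn D ->
  forall (Q : term) (ts : list term),
    length ts = dn D ->
    Call (dmi_prog D ++ ceDP) [Fn Solve (Q0 :: us)] (Fn Solve (Q :: ts)) ->
    exists G : term,
      Call (M0 ++ ce P) [Fn Solve [Q0]] (Fn Solve [G]) /\ instance Q G.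
Proof.
  intros Hwf _ _ HceD _ _ _ Q ts _ (B & rest & Hnode & r & Hr & <-).
  assert (Hsolve_atom : forall args, Forall is_atom [Fn Solve args])
    by (intros; repeat constructor; apply is_atom_Fn).
  assert (Hstart : vanilla_generalizes [Fn Solve [Q0]] [Fn Solve (Q0 :: us)])
    by (exists Var; simpl; rewrite subst_Var; reflexivity).
  destruct (ld_node_vanilla_generalizes _ (M0 ++ ce P) _ _ _
              (definite_program_dmi D P _ _ Hwf HceD) (vanilla_simulates_dmi_ceD D P _ Hwf HceD)
              (Hsolve_atom _) Hstart Hnode) as (V & HV & HVgen).
  pose proof (ld_node_atoms _ _ _ (definite_program_vanilla P) HV (Hsolve_atom _)) as HVat.
  destruct (vanilla_generalizes_solve V _ _ _ HVat HVgen) as (G & V' & -> & HG).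
  exists G. split.
  - exists (Fn Solve [G]), V'. split; [exact HV | apply variant_refl].
  - exact (instance_trans _ _ _ (instance_renamed r Q Hr) HG).
Qed.
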